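(* Fix the parameters $S_1,\dots,S_{\mathcal K}$, $\lambda_1,\dots,\lambda_{\mathcal K}$ of the storage model in the context. Suppose that the linear system \[ \sum_{j=1}^{\kappa_i}\alpha_{ij}=\lambda_i\ (i=1,\dots,\mathcal K),\qquad \sum_{i=1}^{\mathcal K}\sum_{j=1}^{\kappa_i}\alpha_{ij}\,\delta_{\ell,s^i_j}=\tfrac1n\ (\ell=1,\dots,n) \] has no non-negative solution $(\alpha_{ij})$. Then for any routing policy $P$, the shape process $\tilde X(t)$ with routing policy $P$ is transient.
   Context: Storage model: there are $n$ nodes $\{1,\dots,n\}$ and $\mathcal K\ge1$ non-empty neighborhoods $S_1,\dots,S_{\mathcal K}\subset\{1,\dots,n\}$ with $\bigcup_i S_i=\{1,\dots,n\}$; $\kappa_i=|S_i|$ and $S_i=\{s^i_1,\dots,s^i_{\kappa_i}\}$. Items arrive at $S_i$ as independent Poisson processes with rates $\lambda_i>0$, $\sum_{i=1}^{\mathcal K}\lambda_i=1$. Let $\Lambda_i=\{p\in\mathbb R^{\kappa_i}:p_j\ge0,\sum_j p_j=1\}$. A routing policy is a map $P:\mathbb N^n\to\Lambda_1\times\dots\times\Lambda_{\mathcal K}$ with $P(x+c\mathbf 1)=P(x)$ for all integers $c$; an item arriving at $S_i$ when the configuration is $x$ is stored at node $s^i_j$ with probability $p^{(i)}_j(x)$, independently for each arrival. $X(t)$ is the vector of node loads, $M(t)=\frac1n\sum_iX_i(t)$, the shape is $\tilde X(t)=X(t)-M(t)\mathbf 1$, and $\tilde X^e(m)$ is the shape observed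 at successive arrival moments. With $\tau=\inf\{m>0:\tilde X^e(m)=0\}$, the process is called transient if $\mathbf P(\tau=\infty\mid\tilde X^e(0)=0)>0$. $\delta_{\ell,m}$ is the Kronecker delta. *)

From HB Require Import structures.
From mathcomp Require Import all_boot all_order all_algebra.
From mathcomp Require Import reals.
Set Implicit Arguments. Unset Strict Implicit. Unset Printing Implicit Defensive.
Import Order.TTheory GRing.Theory Num.Theory.
Local Open Scope ring_scope.

(* A load configuration: nodes are 'I_n (node l stands for l+1 in the paper). *)
Definition config (n : nat) := {ffun 'I_n -> nat}.

Definition config0 (n : nat) : config n := [ffun => 0%N].

Definition incr (n : nat) (x : config n) (l : 'I_n) : config n :=
  [ffun k => (x k + (k == l))%N].

(* the shape X - M 1 of x is 0 iff all loads are equal *)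
Definition balanced (n : nat) (x : config n) : bool :=
  [forall a, forall b, x a == x b].

(* Probability that the next arrival (at an arrival moment) is stored at node l,
   given configuration x: the arrival is at neighborhood S_i w.p. lam i
   (competing independent Poisson processes of total rate 1), and is then
   stored at s i j w.p. P x i j. *)
Definition route_prob (R : realType) (n K : nat) (kappa : 'I_K -> nat)
  (s : forall i : 'I_K, 'I_(kappa i) -> 'I_n) (lam : 'I_K -> R)
  (P : config n -> forall i : 'I_K, 'I_(kappa i) -> R)
  (x : config n) (l : 'I_n) : R :=
  \sum_(i < K) lam i * \sum_(j < kappa i) P x i j * (s i j == l)%:R.

Fixpoint path_prob (R : realType) (n : nat) (q : config n -> 'I_n -> R)
  (x : config n) (w : seq 'I_n) : R :=
  match w with
  | [::] => 1
  | l :: w' => q x l * path_prob q (incr x l) w'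
  end.

Fixpoint hits (n : nat) (x : config n) (w : seq 'I_n) : bool :=
  match w with
  | [::] => false
  | l :: w' => balanced (incr x l) || hits (incr x l) w'
  end.

(* P(tau <= m | shape at time 0 is 0) for the embedded chain, started from the
   load vector 0 (any constant vector gives the same law by shift invariance). *)
Definition return_prob (R : realType) (n : nat) (q : config n -> 'I_n -> R)
  (m : nat) : R :=
  \sum_(w : m.-tuple 'I_n) path_prob q (config0 n) w * (hits (config0 n) w)%:R.

(* transience: P(tau = oo | shape 0) = 1 - sup_m P(tau <= m) > 0 *)
Definition transient (R : realType) (n : nat) (q : config n -> 'I_n -> R) : Prop :=
  exists2 eps : R, 0 < eps & forall m : nat, return_prob q m <= 1 - eps.

(** Every routing decision p induces the flow alpha_ij = lam_i p_ij, which satisfies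
    the first group of equations, so infeasibility means that the compact convex set of
    node-rate vectors of such flows misses the uniform vector (1/n, ..., 1/n).
    Projecting the uniform vector onto that set gives a strictly separating linear
    functional a; centering it yields a potential v with sum 0 whose expected increment
    is at least some d > 0 whatever the configuration.  The potential vanishes on
    balanced configurations, and exp(-theta * potential) is a supermartingale that
    contracts by a factor 1 - eps at each step; as it starts at 1, the probability of
    returning to a balanced shape within m steps never exceeds 1 - eps. *)
From HB Require Import structures.
From mathcomp Require Import all_boot all_order all_algebra.
From mathcomp Require Import all_classical all_reals all_analysis.
From mathcomp Require Import ring lra.
Import Order.TTheory GRing.Theory Num.Theory numFieldNormedType.Exports.
Local Open Scope ring_scope.

Lemma expRN_le_quadratic {R : realType} (z : R) :
  `|z| <= 1/2 -> expR (- z) <= 1 - z + 2 * z ^+ 2.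
Proof.
move=> /[dup] hz; rewrite ler_norml => /andP [hz1 hz2].
have hz1D : 0 < 1 + z by lra.
rewrite expRN; apply: (@le_trans _ _ (1 + z)^-1).
  by rewrite lef_pV2 ?posrE ?expR_gt0 // expR_ge1Dx.
rewrite -[leLHS]mul1r ler_pdivrMr //.
have : 0 <= z ^+ 2 * (1 + 2 * z) by rewrite mulr_ge0 ?sqr_ge0 //; lra.
nra.
Qed.

Lemma sum_tupleS {V : nmodType} {T : finType} (F : seq T -> V) m :
  \sum_(w : m.+1.-tuple T) F w = \sum_(t : T) \sum_(w : m.-tuple T) F (t :: w).
Proof.
rewrite pair_big /=.
rewrite (reindex (fun p : T * m.-tuple T => [tuple of p.1 :: p.2])) //=.
exists (fun w : m.+1.-tuple T => (thead w, [tuple of behead w])) => [[t w]|w] _ /=.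
  by rewrite theadE; congr pair; apply/val_inj.
by rewrite [RHS]tuple_eta.
Qed.

Lemma ge0_linear_coef {R : realFieldType} (X Y : R) :
  (forall t, 0 < t -> t <= 1 -> 0 <= 2 * t * X + t ^+ 2 * Y) -> 0 <= X.
Proof.
move=> hXY; rewrite leNgt; apply/negP => X_lt0.
have hXY1 := hXY 1 ltr01 (lexx 1); rewrite expr1n in hXY1.
have Y_gt0 : 0 < Y by lra.
pose t := - X / Y.
have tY : t * Y = - X by rewrite /t mulfVK // gt_eqF.
have t_gt0 : 0 < t by rewrite /t divr_gt0 // oppr_gt0.
have t_le1 : t <= 1 by rewrite /t ler_pdivrMr // mul1r; lra.
have := hXY t t_gt0 t_le1.
have -> : 2 * t * X + t ^+ 2 * Y = t * X by rewrite expr2 -[t * t * Y]mulrA tY; ring.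
by rewrite leNgt pmulr_rlt0 // X_lt0.
Qed.

Lemma continuous_sum {U : TopologicalNmodule.type} {T : topologicalType} {I : finType}
    (F : I -> T -> U) :
  (forall i, continuous (F i)) -> continuous (fun x => \sum_i F i x).
Proof. by move=> cF; apply: continuous_big => //; exact: add_continuous. Qed.

Lemma sum_centered {R : numFieldType} n (a : 'I_n -> R) :
  \sum_l (a l - n%:R^-1 * \sum_k a k) = 0.
Proof.
case: n a => [|n] a; first by rewrite big_ord0.
by rewrite sumrB sumr_const card_ord; field; rewrite addrC natr1 pnatr_eq0.
Qed.

Lemma centered_pairing {R : comPzRingType} n (a p : 'I_n -> R) (c : R) :
  \sum_l p l = 1 -> \sum_l p l * (a l - c * \sum_k a k) = \sum_l a l * (p l - c).
Proof.
move=> p_sum1; under eq_bigr do rewrite mulrBr; under [RHS]eq_bigr do rewrite mulrBr.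
rewrite !sumrB -!mulr_suml p_sum1 mul1r [c * _]mulrC.
by congr (_ - _); apply: eq_bigr => l _; rewrite mulrC.
Qed.

Section DriftTransience.
Context {R : realType} {n : nat} {q : config n -> 'I_n -> R}.
Hypothesis q_ge0 : forall x l, 0 <= q x l.
Hypothesis q_sum1 : forall x, \sum_l q x l = 1.

Lemma path_prob_sum1 m x : \sum_(w : m.-tuple 'I_n) path_prob q x w = 1.
Proof.
elim: m x => [|m IHm] x.
  by rewrite (big_pred1 [tuple]) // => w; apply/esym/eqP; exact: tuple0.
rewrite sum_tupleS -(q_sum1 x); apply: eq_bigr => l _ /=.
by rewrite -mulr_sumr IHm mulr1.
Qed.

Definition hit_prob m x :=
  \sum_(w : m.-tuple 'I_n) path_prob q x w * (hits x w)%:R.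

Lemma hit_prob0 x : hit_prob 0 x = 0.
Proof. by rewrite /hit_prob big1 // => w _; rewrite [w]tuple0 /= mulr0. Qed.

Lemma hit_probS m x : hit_prob m.+1 x =
  \sum_l q x l * (if balanced (incr x l) then 1 else hit_prob m (incr x l)).
Proof.
rewrite /hit_prob (sum_tupleS (fun w => path_prob q x w * (hits x w)%:R)).
apply: eq_bigr => l _ /=; case: ifP => _ /=.
  rewrite -[in RHS](path_prob_sum1 m (incr x l)) mulr_sumr.
  by apply: eq_bigr => w _; rewrite mulr1.
by rewrite mulr_sumr; apply: eq_bigr => w _; rewrite mulrA.
Qed.

Context {v : 'I_n -> R} {d : R}.
Hypothesis v_sum0 : \sum_l v l = 0.
Hypothesis d_gt0 : 0 < d.
Hypothesis drift : forall x, d <= \sum_l q x l * v l.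

Definition potential (x : config n) := \sum_l v l * (x l)%:R.

Lemma potential_incr x l : potential (incr x l) = potential x + v l.
Proof.
rewrite /potential (bigD1 l) //= [in RHS](bigD1 l) //= ffunE eqxx natrD mulrDr.
rewrite -!addrA mulr1; congr (_ + _); rewrite addrC; congr (_ + _).
by apply: eq_bigr => k kl; rewrite ffunE (negbTE kl) addn0.
Qed.

Lemma potential_balanced x : balanced x -> potential x = 0.
Proof.
move=> /forallP bx; case: (pickP (@predT 'I_n)) => [l0 _|noidx]; last first.
  by rewrite /potential big_pred0.
rewrite /potential (eq_bigr (fun l => v l * (x l0)%:R)) => [|l _].
  by rewrite -mulr_suml v_sum0 mul0r.
by move/forallP: (bx l) => /(_ l0)/eqP ->.
Qed.

Lemma potential0 : potential (config0 n) = 0.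
Proof. by rewrite /potential big1 // => l _; rewrite ffunE mulr0. Qed.

Let B := d + \sum_l `|v l|.
Let theta := d / (4 * B ^+ 2).
Let eps := theta * d / 2.

Let B_gt0 : 0 < B.
Proof. by rewrite ltr_wpDr // sumr_ge0. Qed.

Let normv_le l : `|v l| <= B.
Proof.
apply: le_trans (ler_wpDl (ltW d_gt0) (lexx _)).
by rewrite (bigD1 l) //= lerDl sumr_ge0.
Qed.

Let theta_gt0 : 0 < theta.
Proof. by rewrite divr_gt0 // mulr_gt0 // exprn_gt0. Qed.

Let eps_gt0 : 0 < eps.
Proof. by rewrite divr_gt0 // mulr_gt0. Qed.

(* theta is tuned so that the quadratic error [2 (theta v_l)^2 <= 2 theta^2 B^2]
   of the exponential is exactly [eps], half of the gain [theta d]. *)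
Lemma expR_step_le l : expR (- (theta * v l)) <= 1 - theta * v l + eps.
Proof.
have d_leB : d <= B by rewrite lerDl sumr_ge0.
have B_pos := B_gt0.
have thetaB2 : theta * B ^+ 2 = d / 4 by rewrite /theta; field; rewrite gt_eqF.
have thetaB : theta * B <= 1/4.
  by rewrite /theta mulrAC ler_pdivrMr ?mulr_gt0 ?exprn_gt0 // expr2; nra.
have htv : `|theta * v l| <= theta * B.
  by rewrite normrM gtr0_norm // ler_pM2l // normv_le.
have hz : `|theta * v l| <= 1/2 by apply: le_trans htv _; lra.
apply: le_trans (expRN_le_quadratic _ hz) _.
have : (theta * v l) ^+ 2 <= theta * B ^+ 2 * theta.
  by move: htv; rewrite ler_norml => /andP [? ?]; nra.
rewrite thetaB2 /eps; nra.
Qed.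

Lemma exp_potential_contract x :
  \sum_l q x l * expR (- (theta * v l)) <= 1 - eps.
Proof.
apply: le_trans (ler_sum _ (fun l _ => ler_wpM2l (q_ge0 x l) (expR_step_le l))) _.
have -> : \sum_l q x l * (1 - theta * v l + eps) =
    1 + eps - theta * \sum_l q x l * v l.
  rewrite mulr_sumr -[1 + eps]mul1r -(q_sum1 x) mulr_suml -sumrB.
  by apply: eq_bigr => l _; ring.
have := ler_wpM2l (ltW theta_gt0) (drift x).
by rewrite /eps; lra.
Qed.

Lemma hit_prob_le m x : hit_prob m x <= expR (- (theta * potential x)) * (1 - eps).
Proof.
have eps_le1 : eps <= 1.
  have := exp_potential_contract (config0 n).
  have : 0 <= \sum_l q (config0 n) l * expR (- (theta * v l)).
    by apply: sumr_ge0 => l _; rewrite mulr_ge0 ?expR_ge0.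
  lra.
elim: m x => [|m IHm] x.
  by rewrite hit_prob0 mulr_ge0 ?expR_ge0 // subr_ge0.
rewrite hit_probS.
apply: (@le_trans _ _ (\sum_l q x l * expR (- (theta * potential (incr x l))))).
  apply: ler_sum => l _; rewrite ler_wpM2l //.
  case: ifP => [/potential_balanced ->|_]; first by rewrite mulr0 oppr0 expR0.
  by apply: le_trans (IHm _) _; rewrite ler_piMr ?expR_ge0 // gerBl ltW // eps_gt0.
under eq_bigr do rewrite potential_incr mulrDr opprD expRD mulrCA.
by rewrite -mulr_sumr ler_wpM2l ?expR_ge0 // exp_potential_contract.
Qed.

Lemma transient_of_drift : transient q.
Proof.
exists eps => [|m]; first exact: eps_gt0.
have := hit_prob_le m (config0 n).
by rewrite potential0 mulr0 oppr0 expR0 mul1r.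
Qed.

End DriftTransience.

Section Flows.
Local Open Scope classical_set_scope.
Context {R : realType} {n K : nat} {kappa : 'I_K -> nat}
  {s : forall i : 'I_K, 'I_(kappa i) -> 'I_n} {lam : 'I_K -> R}.
Hypothesis lam_ge0 : forall i, 0 <= lam i.
Hypothesis lam_sum : \sum_(i < K) lam i = 1.

Local Notation flow := (forall i : 'I_K, 'I_(kappa i) -> R).

Definition admissible (alpha : flow) :=
  (forall i j, 0 <= alpha i j) /\ (forall i, \sum_(j < kappa i) alpha i j = lam i).

Definition node_rate (alpha : flow) (l : 'I_n) :=
  \sum_(i < K) \sum_(j < kappa i) alpha i j * (l == s i j)%:R.

Definition imbalance (alpha : flow) := \sum_(l < n) (node_rate alpha l - n%:R^-1) ^+ 2.

Definition flow_segment (beta alpha : flow) (t : R) : flow :=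
  fun i j => beta i j + t * (alpha i j - beta i j).

Lemma admissible_segment beta alpha t : admissible beta -> admissible alpha ->
  0 <= t -> t <= 1 -> admissible (flow_segment beta alpha t).
Proof.
move=> [beta_ge0 beta_sum] [alpha_ge0 alpha_sum] t_ge0 t_le1.
rewrite /flow_segment; split => [i j|i].
  have -> : beta i j + t * (alpha i j - beta i j) = (1 - t) * beta i j + t * alpha i j.
    by ring.
  by rewrite addr_ge0 // mulr_ge0 // subr_ge0.
by rewrite big_split /= -mulr_sumr sumrB beta_sum alpha_sum subrr mulr0 addr0.
Qed.

Lemma node_rate_segment beta alpha t l : node_rate (flow_segment beta alpha t) l =
  node_rate beta l + t * (node_rate alpha l - node_rate beta l).
Proof.
rewrite /node_rate -sumrB mulr_sumr -big_split /=; apply: eq_bigr => i _.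
rewrite -sumrB mulr_sumr -big_split; apply: eq_bigr => j _; rewrite /flow_segment /=; ring.
Qed.

(* Flows are encoded as row vectors indexed by the arcs (i, j), to borrow the
   topology of ['rV[R]_N]. *)
Local Notation arc := {i : 'I_K & 'I_(kappa i)}.
Let N := #|{: arc}|.

Definition flow_of_row (w : 'rV[R]_N) : flow :=
  fun i j => w ord0 (enum_rank (Tagged (fun i => 'I_(kappa i)) j)).

Definition row_of_flow (alpha : flow) : 'rV[R]_N :=
  \row_k alpha (tag (enum_val k)) (tagged (enum_val k)).

Lemma row_of_flowK alpha : flow_of_row (row_of_flow alpha) = alpha.
Proof.
apply: functional_extensionality_dep => i; apply/funext => j.
by rewrite /flow_of_row /row_of_flow mxE enum_rankK.
Qed.

Lemma flow_of_row_continuous i j : continuous (fun w => flow_of_row w i j).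
Proof. exact: coord_continuous. Qed.

Let admissible_rows := [set w : 'rV[R]_N | admissible (flow_of_row w)].

Let admissible_rows_closed : closed admissible_rows.
Proof.
have -> : admissible_rows =
    (\bigcap_(i in setT) \bigcap_(j in setT) [set w | 0 <= flow_of_row w i j]) `&`
    (\bigcap_(i in setT) [set w | \sum_(j < kappa i) flow_of_row w i j = lam i]).
  rewrite predeqE => w; split => [[w_ge0 w_sum]|[w_ge0 w_sum]].
    by split => i _ //; move=> j _; exact: w_ge0.
  by split => [i j|i]; [exact: (w_ge0 i I j I) | exact: (w_sum i I)].
apply: closedI; apply: closed_bigI => i _; first apply: closed_bigI => j _.
  exact: (continuous_closedP _).1 (flow_of_row_continuous i j) _ (closed_ge (y := 0)).
apply: (continuous_closedP _).1 _ _ (closed_eq (y := lam i)).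
by apply: continuous_sum => j; exact: flow_of_row_continuous.
Qed.

Let admissible_rows_compact : compact admissible_rows.
Proof.
have cube_compact :=
  @rV_compact R N (fun=> `[0, 1]%classic) (fun=> @segment_compact R 0 1).
apply: (subclosed_compact admissible_rows_closed cube_compact).
move=> w [w_ge0 w_sum] k /=; rewrite in_itv /=.
rewrite -(enum_valK k); case: (enum_val k) => i j.
apply/andP; split; first exact: w_ge0.
have lam_le1 : lam i <= 1 by rewrite -lam_sum (bigD1 i) //= lerDl sumr_ge0.
apply: le_trans lam_le1; rewrite -(w_sum i) (bigD1 j) //= lerDl.
by apply: sumr_ge0 => j' _; exact: w_ge0.
Qed.

Let imbalance_continuous : continuous (fun w => imbalance (flow_of_row w)).
Proof.
pose dev l w := node_rate (flow_of_row w) l - n%:R^-1.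
have dev_cont l : continuous (dev l).
  move=> w; apply: (@continuousB _ _ _ (fun w => node_rate (flow_of_row w) l) (cst _)).
    apply: continuous_sum => i; apply: continuous_sum => j w'.
    apply: (@continuousM _ _ (fun w => flow_of_row w i j) (cst _)).
      exact: flow_of_row_continuous.
    exact: cst_continuous.
  exact: cst_continuous.
apply: continuous_sum => l w.
by apply: (@continuousM _ _ (dev l) (dev l)); exact: dev_cont.
Qed.

Lemma imbalance_minimizer : (exists alpha, admissible alpha) ->
  exists2 beta, admissible beta &
    forall alpha, admissible alpha -> imbalance beta <= imbalance alpha.
Proof.
move=> [alpha0 alpha0_adm].
have nonempty : admissible_rows !=set0.
  by exists (row_of_flow alpha0); rewrite /admissible_rows /= row_of_flowK.
have [w w_adm w_min] := EVT_min_rV nonempty admissible_rows_compact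
  (continuous_subspaceT imbalance_continuous).
exists (flow_of_row w); first by move: w_adm; rewrite inE.
move=> alpha alpha_adm; rewrite -[alpha]row_of_flowK; apply: w_min.
by rewrite inE /admissible_rows /= row_of_flowK.
Qed.

Lemma imbalance_min_first_order beta alpha :
  admissible beta -> (forall gamma, admissible gamma -> imbalance beta <= imbalance gamma) ->
  admissible alpha ->
  0 <= \sum_l (node_rate beta l - n%:R^-1) * (node_rate alpha l - node_rate beta l).
Proof.
move=> beta_adm beta_min alpha_adm.
apply: (@ge0_linear_coef _ _ (\sum_l (node_rate alpha l - node_rate beta l) ^+ 2)).
move=> t t_gt0 t_le1.
have := beta_min _ (admissible_segment _ _ t beta_adm alpha_adm (ltW t_gt0) t_le1).
rewrite /imbalance; under [X in _ <= X]eq_bigr do rewrite node_rate_segment.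
set dev := fun l => node_rate beta l - n%:R^-1.
set slope := fun l => node_rate alpha l - node_rate beta l.
have -> : \sum_l (node_rate beta l + t * slope l - n%:R^-1) ^+ 2 =
    \sum_l dev l ^+ 2 + (2 * t * \sum_l dev l * slope l + t ^+ 2 * \sum_l slope l ^+ 2).
  by rewrite !mulr_sumr -!big_split; apply: eq_bigr => l _ /=; rewrite /dev; ring.
by rewrite lerDl.
Qed.

Lemma separating_functional : (exists alpha, admissible alpha) ->
  ~ (exists2 alpha, admissible alpha & forall l, node_rate alpha l = n%:R^-1) ->
  exists a : 'I_n -> R, exists2 del, 0 < del &
    forall alpha, admissible alpha -> del <= \sum_l a l * (node_rate alpha l - n%:R^-1).
Proof.
move=> feasible infeasible; have [beta beta_adm beta_min] := imbalance_minimizer feasible.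
exists (fun l => node_rate beta l - n%:R^-1), (imbalance beta).
  rewrite lt_def sumr_ge0 ?andbT => [|l _]; last exact: sqr_ge0.
  apply: contra_notN infeasible => /eqP beta_balanced; exists beta => // l.
  have dev_sq_ge0 k : 0 <= (node_rate beta k - n%:R^-1) ^+ 2 by exact: sqr_ge0.
  have /eqP := @psumr_eq0P _ _ _ _ (fun k _ => dev_sq_ge0 k) beta_balanced l isT.
  by rewrite sqrf_eq0 subr_eq0 => /eqP.
move=> alpha alpha_adm.
have := imbalance_min_first_order _ _ beta_adm beta_min alpha_adm.
suff -> : \sum_l (node_rate beta l - n%:R^-1) * (node_rate alpha l - n%:R^-1) =
    imbalance beta +
    \sum_l (node_rate beta l - n%:R^-1) * (node_rate alpha l - node_rate beta l).
  by rewrite lerDl.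
by rewrite /imbalance -big_split; apply: eq_bigr => l _ /=; ring.
Qed.

Context {P : config n -> forall i : 'I_K, 'I_(kappa i) -> R}.
Hypothesis P_ge0 : forall x i j, 0 <= P x i j.
Hypothesis P_sum1 : forall x i, \sum_(j < kappa i) P x i j = 1.

Definition routing_flow x : flow := fun i j => lam i * P x i j.

Lemma routing_flow_admissible x : admissible (routing_flow x).
Proof.
split => [i j|i]; first by rewrite mulr_ge0.
by rewrite -mulr_sumr P_sum1 mulr1.
Qed.

Lemma route_probE x l : route_prob s lam P x l = node_rate (routing_flow x) l.
Proof.
apply: eq_bigr => i _; rewrite mulr_sumr.
by apply: eq_bigr => j _; rewrite mulrA eq_sym.
Qed.

Lemma route_prob_ge0 x l : 0 <= route_prob s lam P x l.
Proof.
rewrite route_probE; apply: sumr_ge0 => i _; apply: sumr_ge0 => j _.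
by rewrite !mulr_ge0 ?ler0n.
Qed.

Lemma route_prob_sum1 x : \sum_l route_prob s lam P x l = 1.
Proof.
have node_sum1 i j : \sum_l (l == s i j)%:R = 1 :> R.
  by rewrite (bigD1 (s i j)) //= eqxx big1 ?addr0 // => l /negbTE ->.
under eq_bigr do rewrite route_probE.
rewrite exchange_big /= -[RHS]lam_sum; apply: eq_bigr => i _.
rewrite exchange_big /= -[RHS](routing_flow_admissible x).2; apply: eq_bigr => j _.
by rewrite -mulr_sumr node_sum1 mulr1.
Qed.

(* Since the routing probabilities sum to 1, centering the separating functional
   changes neither its pairing with them nor, hence, the gap [d]. *)
Lemma routing_drift :
  ~ (exists alpha : flow, [/\ forall i j, 0 <= alpha i j,
      forall i, \sum_(j < kappa i) alpha i j = lam i &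
      forall l, \sum_(i < K) \sum_(j < kappa i) alpha i j * (l == s i j)%:R = n%:R^-1]) ->
  exists v : 'I_n -> R, exists2 d, 0 < d &
    \sum_l v l = 0 /\ forall x, d <= \sum_l route_prob s lam P x l * v l.
Proof.
move=> no_solution.
have infeasible : ~ exists2 alpha, admissible alpha & forall l, node_rate alpha l = n%:R^-1.
  by move=> [alpha [alpha_ge0 alpha_sum] alpha_uniform]; apply: no_solution; exists alpha.
have [a [d d_gt0 a_sep]] :=
  separating_functional (ex_intro _ _ (routing_flow_admissible (config0 n))) infeasible.
exists (fun l => a l - n%:R^-1 * \sum_k a k), d => //; split; first exact: sum_centered.
move=> x; rewrite centered_pairing ?route_prob_sum1 //.
under eq_bigr do rewrite route_probE.
exact: a_sep (routing_flow_admissible x).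
Qed.

End Flows.

Theorem corollary2p1 (R : realType) (n K : nat) (kappa : 'I_K -> nat)
  (s : forall i : 'I_K, 'I_(kappa i) -> 'I_n) (lam : 'I_K -> R)
  (HK : (0 < K)%N)
  (Hkappa : forall i, (0 < kappa i)%N)
  (Hs_inj : forall i, injective (s i))
  (Hcover : forall l : 'I_n, exists i, exists j, s i j = l)
  (Hlam_pos : forall i, 0 < lam i)
  (Hlam_sum : \sum_(i < K) lam i = 1)
  (Hnosol : ~ exists alpha : forall i : 'I_K, 'I_(kappa i) -> R,
      [/\ forall i j, 0 <= alpha i j,
          forall i, \sum_(j < kappa i) alpha i j = lam i &
          forall l : 'I_n,
            \sum_(i < K) \sum_(j < kappa i) alpha i j * (l == s i j)%:R
              = n%:R^-1])
  (P : config n -> forall i : 'I_K, 'I_(kappa i) -> R)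
  (HP_nonneg : forall x i j, 0 <= P x i j)
  (HP_sum : forall x i, \sum_(j < kappa i) P x i j = 1)
  (HP_shift : forall (x : config n) (c : nat) i j,
      P [ffun k => (x k + c)%N] i j = P x i j) :
  transient (route_prob s lam P).
Proof.
have lam_ge0 i : 0 <= lam i := ltW (Hlam_pos i).
have [v [d d_gt0 [v_sum0 drift]]] := routing_drift lam_ge0 Hlam_sum HP_nonneg HP_sum Hnosol.
apply: (transient_of_drift _ _ v_sum0 d_gt0 drift).
  exact: (route_prob_ge0 lam_ge0 HP_nonneg).
exact: (route_prob_sum1 lam_ge0 Hlam_sum HP_nonneg HP_sum).
Qed.
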